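(* Let $F$ be any function from syntax trees to the reals that takes at most $k$ distinct values, and let $T_{init}$ be the number of nodes of the initial tree. Then for both SMO-GP-single and SMO-GP-multi applied to MO-$F(X)=(F(X),C(X))$, the expected number of iterations until the population contains the empty tree is $O(k\,T_{init})$.
   Context: Fix an integer $n\ge 1$; the terminal set is $T=\{x_1,\bar x_1,\dots,x_n,\bar x_n\}$. A syntax tree is either the empty tree or a rooted ordered binary tree whose inner nodes are all labelled by the binary function $J$ (join, exactly two ordered children) and whose leaves are labelled by elements of $T$. The complexity $C(X)$ is the number of nodes of $X$ (0 for the empty tree). In MO-$F$, $F$ is to be maximized and $C$ minimized. Mutation (HVL-Prime applied $k'$ times): each application chooses uniformly at random one of three operations. Substitute: replace a uniformly random leaf by a uniformly random $u\in T$. Insert: choose a uniformly random node $v$ and uniformly random $u\in T$, replace $v$ by a $J$-node with children $u$ and $v$ in uniformly random order (inserting into the empty tree yields the single leaf $u$). Delete: choose a uniformly random leaf $v$ with parent $p$ and sibling $u$, replace $p$ by $u$ (deleting $p$ and $v$; deleting the only leaf of a one-leaf tree yields the empty tree). For single-operation mutation $k'=1$; for multi-operation mutation $k'=1+\mathrm{Pois}(1)$ with $\mathrm{Pois}(1)$ a Poisson random variable with mean 1. Dominance: $Y\succeq X$ iff $F(Y)\ge F(X)$ and $C(Y)\le C(X)$; $Y\succ X$ iff $Y\succeq X$ and ($F(Y)>F(X)$ or $C(Y)<C(X)$). SMO-GP: choose an initial tree $X$ and set $P:=\{X\}$; repeat: choose $X\in P$ uniformly at random, let $Y$ be a mutated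 copy of $X$; if no $Z\in P$ satisfies $Z\succ Y$, set $P:=(P\setminus\{Z\in P: Y\succeq Z\})\cup\{Y\}$. SMO-GP-single uses single-operation mutation, SMO-GP-multi multi-operation mutation. *)

From Stdlib Require Import Reals List Arith Lia Lra.
Import ListNotations.
Open Scope R_scope.

(* A literal (i, true) is x_{i+1}, (i, false) is its negation; valid iff i < n. *)
Definition lit : Type := (nat * bool)%type.

Inductive tree : Type :=
| Leaf (u : lit)
| Join (l r : tree).

(* A syntax tree is either empty (None) or a non-empty tree. *)
Definition stree : Type := option tree.

Fixpoint tsize (t : tree) : nat :=
  match t with Leaf _ => 1%nat | Join l r => S (tsize l + tsize r) end.

Definition cplx (X : stree) : nat :=
  match X with None => 0%nat | Some t => tsize t end.

Fixpoint tvalid (n : nat) (t : tree) : Prop :=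
  match t with
  | Leaf (i, _) => (i < n)%nat
  | Join l r => tvalid n l /\ tvalid n r
  end.

Definition valid (n : nat) (X : stree) : Prop :=
  match X with None => True | Some t => tvalid n t end.

Definition lits (n : nat) : list lit :=
  flat_map (fun i => [(i, true); (i, false)]) (seq 0 n).

Fixpoint subs (t : tree) (u : lit) : list tree :=
  match t with
  | Leaf _ => [Leaf u]
  | Join l r => map (fun l' => Join l' r) (subs l u) ++ map (Join l) (subs r u)
  end.

Fixpoint ins (t : tree) (u : lit) : list tree :=
  [Join (Leaf u) t; Join t (Leaf u)] ++
  match t with
  | Leaf _ => []
  | Join l r => map (fun l' => Join l' r) (ins l u) ++ map (Join l) (ins r u)
  end.

Fixpoint del (t : tree) : list tree :=
  match t with
  | Leaf _ => []
  | Join l r =>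
      (match l with Leaf _ => [r] | _ => map (fun l' => Join l' r) (del l) end) ++
      (match r with Leaf _ => [l] | _ => map (Join l) (del r) end)
  end.

Definition dist (A : Type) : Type := list (R * A).

Definition dret {A} (x : A) : dist A := [(1, x)].

Definition uniform {A} (l : list A) : dist A :=
  map (fun x => (/ INR (length l), x)) l.

Definition dscale {A} (c : R) (d : dist A) : dist A :=
  map (fun px => (c * fst px, snd px)) d.

Definition dbind {A B} (d : dist A) (f : A -> dist B) : dist B :=
  flat_map (fun px => dscale (fst px) (f (snd px))) d.

Definition dmap {A B} (f : A -> B) (d : dist A) : dist B :=
  map (fun px => (fst px, f (snd px))) d.

Definition substitute_d (n : nat) (X : stree) : dist stree :=
  match X with
  | None => dret None
  | Some t => uniform (flat_map (fun u => map Some (subs t u)) (lits n))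
  end.

Definition insert_d (n : nat) (X : stree) : dist stree :=
  match X with
  | None => uniform (map (fun u => Some (Leaf u)) (lits n))
  | Some t => uniform (flat_map (fun u => map Some (ins t u)) (lits n))
  end.

Definition delete_d (X : stree) : dist stree :=
  match X with
  | None => dret None
  | Some (Leaf _) => dret None
  | Some t => uniform (map Some (del t))
  end.

Definition hvl (n : nat) (X : stree) : dist stree :=
  dscale (1/3) (substitute_d n X) ++ dscale (1/3) (insert_d n X) ++
  dscale (1/3) (delete_d X).

Fixpoint hvl_iter (n m : nat) (X : stree) : dist stree :=
  match m with
  | O => dret X
  | S m' => dbind (hvl_iter n m' X) (hvl n)
  end.

Inductive algo : Type := Single | Multi.

(* Mutation distribution.  For Multi, k' = 1 + Pois(1), i.e. P(k' = j+1) =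
   e^{-1}/j!; the Poisson variable is truncated to j <= J, giving a
   sub-distribution.  For Single, J is irrelevant. *)
Definition mutate (a : algo) (n J : nat) (X : stree) : dist stree :=
  match a with
  | Single => hvl n X
  | Multi =>
      flat_map (fun j => dscale (exp (-1) / INR (fact j)) (hvl_iter n (S j) X))
               (seq 0 (S J))
  end.

Definition Rleb (x y : R) : bool := if Rle_dec x y then true else false.
Definition Rltb (x y : R) : bool := if Rlt_dec x y then true else false.

Definition wdom (F : stree -> R) (Y X : stree) : bool :=
  Rleb (F X) (F Y) && Nat.leb (cplx Y) (cplx X).

Definition sdom (F : stree -> R) (Y X : stree) : bool :=
  wdom F Y X && (Rltb (F X) (F Y) || Nat.ltb (cplx Y) (cplx X)).

Definition update (F : stree -> R) (P : list stree) (Y : stree) : list stree :=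
  if existsb (fun Z => sdom F Z Y) P then P
  else Y :: filter (fun Z => negb (wdom F Y Z)) P.

Definition step (a : algo) (n J : nat) (F : stree -> R) (P : list stree)
  : dist (list stree) :=
  dbind (uniform P) (fun X => dmap (update F P) (mutate a n J X)).

Definition has_empty (P : list stree) : bool :=
  existsb (fun X => match X with None => true | Some _ => false end) P.

(* probability that after t iterations started from P the population has
   not yet contained the empty tree (w.r.t. the J-truncated kernel) *)
Fixpoint pnothit (a : algo) (n J : nat) (F : stree -> R) (t : nat)
         (P : list stree) : R :=
  if has_empty P then 0 else
  match t with
  | O => 1
  | S t' => fold_right Rplus 0
              (map (fun pq => fst pq * pnothit a n J F t' (snd pq))
                   (step a n J F P))
  end.

(* E[tau] <= B, where tau is the number of iterations until the population
   contains the empty tree, started from P = {X0}.  Since E[tau] =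
   sum_t P(tau > t) and the truncated probabilities increase to the true ones
   as J -> infinity, E[tau] <= B iff all these finite partial sums are <= B. *)
Definition expected_hit_le (a : algo) (n : nat) (F : stree -> R) (X0 : stree)
           (B : R) : Prop :=
  forall J T : nat,
    fold_right Rplus 0 (map (fun t => pnothit a n J F t [X0]) (seq 0 T)) <= B.

Definition at_most_k_values (n : nat) (F : stree -> R) (k : nat) : Prop :=
  exists vals : list R, (length vals <= k)%nat /\
    forall X, valid n X -> In (F X) vals.

(* Proof idea (additive drift on the minimum complexity of the population).
   Two trees with the same F-value are comparable under dominance, so the
   population never contains two trees with equal F-value and thus has at most
   k members.  The minimum complexity cmin P never increases: a simplest tree
   is only removed by an offspring that is at least as simple.  In every
   iteration a simplest tree is selected with probability >= 1/k, and mutation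
   deletes one of its leaves with probability >= e^{-1}/3 (the first of the
   k' operations is a deletion with probability 1/3, and k' = 1 has
   probability e^{-1} for multi-operation mutation); the smaller offspring is
   accepted and cmin P decreases.  Hence cmin P drops by at least one with
   probability >= p = e^{-1}/(3k), and the expected hitting time is at most
   cmin P / p = 3 e k T_init. *)

From Pilot Require Import Defs.
From Stdlib Require Import Reals List Arith Lia Lra.
Import ListNotations.
Open Scope R_scope.

Definition sumR (l : list R) : R := fold_right Rplus 0 l.

Lemma sumR_app (l1 l2 : list R) : sumR (l1 ++ l2) = sumR l1 + sumR l2.
Proof. induction l1 as [|x l1 IH]; simpl; [ring|]. unfold sumR in *; simpl; rewrite IH; ring. Qed.

Lemma sumR_le {A} (l : list A) (f g : A -> R) :
  (forall x, In x l -> f x <= g x) -> sumR (map f l) <= sumR (map g l).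
Proof.
  induction l as [|x l IH]; intros H; unfold sumR in *; simpl; [lra|].
  apply Rplus_le_compat; [apply H; simpl; auto|apply IH; intros; apply H; simpl; auto].
Qed.

Lemma sumR_nonneg {A} (l : list A) (f : A -> R) :
  (forall x, In x l -> 0 <= f x) -> 0 <= sumR (map f l).
Proof.
  intros H. replace 0 with (sumR (map (fun _ : A => 0) l)).
  - now apply sumR_le.
  - induction l as [|x l IH]; unfold sumR in *; simpl; [reflexivity|].
    rewrite IH; [ring|]. intros; apply H; simpl; auto.
Qed.

Lemma sumR_in {A} (l : list A) (f : A -> R) (x : A) :
  In x l -> (forall y, In y l -> 0 <= f y) -> f x <= sumR (map f l).
Proof.
  induction l as [|y l IH]; simpl; intros Hx H; [tauto|]. unfold sumR in *; simpl.
  assert (0 <= fold_right Rplus 0 (map f l)) by (apply sumR_nonneg; auto).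
  destruct Hx as [<-|Hx]; [lra|].
  assert (0 <= f y) by auto. specialize (IH Hx (fun z Hz => H z (or_intror Hz))). lra.
Qed.

Lemma sumR_scale {A} (l : list A) (f : A -> R) (c : R) :
  sumR (map (fun x => c * f x) l) = c * sumR (map f l).
Proof. induction l; unfold sumR in *; simpl; [ring|]. rewrite IHl; ring. Qed.

Lemma sumR_plus {A} (l : list A) (f g : A -> R) :
  sumR (map (fun x => f x + g x) l) = sumR (map f l) + sumR (map g l).
Proof. induction l; unfold sumR in *; simpl; [ring|]. rewrite IHl; ring. Qed.

Lemma sumR_ext_in {A} (l : list A) (f g : A -> R) :
  (forall x, In x l -> f x = g x) -> sumR (map f l) = sumR (map g l).
Proof. intros H; f_equal; apply map_ext_in; auto. Qed.

Lemma sumR_ones {A} (l : list A) : sumR (map (fun _ => 1) l) = INR (length l).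
Proof.
  induction l as [|x l IH]; unfold sumR in *; simpl; [reflexivity|].
  rewrite IH. destruct (length l); simpl; ring.
Qed.

Lemma sumR_swap {A B} (l1 : list A) (l2 : list B) (g : A -> B -> R) :
  sumR (map (fun a => sumR (map (g a) l2)) l1) =
  sumR (map (fun b => sumR (map (fun a => g a b) l1)) l2).
Proof.
  induction l1 as [|a l1 IH]; simpl.
  - unfold sumR at 1; simpl. induction l2; unfold sumR in *; simpl; [ring|].
    rewrite <- IHl2; ring.
  - unfold sumR at 1; simpl.
    fold (sumR (map (fun a0 => sumR (map (g a0) l2)) l1)).
    rewrite IH, <- sumR_plus. reflexivity.
Qed.

Definition E {A} (d : Defs.dist A) (h : A -> R) : R :=
  sumR (map (fun pq => fst pq * h (snd pq)) d).

Definition mass {A} (d : Defs.dist A) : R := E d (fun _ => 1).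

Definition nonneg {A} (d : Defs.dist A) : Prop := forall pq, In pq d -> 0 <= fst pq.

Definition subdist {A} (d : Defs.dist A) : Prop := nonneg d /\ mass d <= 1.

Definition Sup {A} (d : Defs.dist A) (Q : A -> Prop) : Prop :=
  forall pq, In pq d -> Q (snd pq).

Lemma E_app {A} (d1 d2 : Defs.dist A) h : E (d1 ++ d2) h = E d1 h + E d2 h.
Proof. unfold E; rewrite map_app, sumR_app; reflexivity. Qed.

Lemma E_scale {A} (d : Defs.dist A) h c : E d (fun x => c * h x) = c * E d h.
Proof. unfold E. rewrite <- sumR_scale. apply sumR_ext_in; intros; ring. Qed.

Lemma E_dscale {A} c (d : Defs.dist A) h : E (dscale c d) h = c * E d h.
Proof.
  unfold E, dscale. rewrite map_map, <- sumR_scale. apply sumR_ext_in; intros; simpl; ring.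
Qed.

Lemma E_flat_map {A B} (l : list B) (f : B -> Defs.dist A) h :
  E (flat_map f l) h = sumR (map (fun x => E (f x) h) l).
Proof. induction l; simpl; [reflexivity|]. rewrite E_app, IHl. reflexivity. Qed.

Lemma E_dbind {A B} (d : Defs.dist A) (f : A -> Defs.dist B) h :
  E (dbind d f) h = E d (fun x => E (f x) h).
Proof.
  unfold dbind. rewrite E_flat_map. apply sumR_ext_in; intros; apply E_dscale.
Qed.

Lemma E_dmap {A B} (f : A -> B) (d : Defs.dist A) h : E (dmap f d) h = E d (fun x => h (f x)).
Proof. unfold E, dmap; rewrite map_map; reflexivity. Qed.

Lemma E_uniform {A} (l : list A) h : E (uniform l) h = / INR (length l) * sumR (map h l).
Proof. unfold E, uniform; rewrite map_map; simpl; apply sumR_scale. Qed.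

Lemma E_dret {A} (x : A) h : E (dret x) h = h x.
Proof. unfold E, dret, sumR; simpl; ring. Qed.

Lemma E_affine {A} (d : Defs.dist A) h c : E d (fun x => c - h x) = c * mass d - E d h.
Proof.
  unfold mass, E. induction d as [|pq d IH]; unfold sumR in *; simpl; [ring|].
  rewrite IH; ring.
Qed.

Lemma E_mono {A} (d : Defs.dist A) h1 h2 :
  nonneg d -> Sup d (fun x => h1 x <= h2 x) -> E d h1 <= E d h2.
Proof. intros H1 H2. apply sumR_le. intros pq Hpq. apply Rmult_le_compat_l; auto. Qed.

Lemma E_nonneg {A} (d : Defs.dist A) h :
  nonneg d -> Sup d (fun x => 0 <= h x) -> 0 <= E d h.
Proof. intros H1 H2. apply sumR_nonneg. intros pq Hpq. apply Rmult_le_pos; auto. Qed.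

Lemma E_le_bound {A} (d : Defs.dist A) h (b : R) :
  subdist d -> 0 <= b -> Sup d (fun x => h x <= b) -> E d h <= b.
Proof.
  intros [Hn Hm] Hb Hh. apply Rle_trans with (E d (fun _ => b * 1)).
  - apply E_mono; [exact Hn|]. intros pq Hpq. rewrite Rmult_1_r. exact (Hh pq Hpq).
  - rewrite E_scale. fold (mass d). rewrite <- (Rmult_1_r b) at 2.
    now apply Rmult_le_compat_l.
Qed.

Lemma nonneg_app {A} (d1 d2 : Defs.dist A) : nonneg d1 -> nonneg d2 -> nonneg (d1 ++ d2).
Proof. intros H1 H2 pq Hin; apply in_app_or in Hin; destruct Hin; auto. Qed.

Lemma nonneg_dscale {A} c (d : Defs.dist A) : 0 <= c -> nonneg d -> nonneg (dscale c d).
Proof.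
  intros Hc H pq Hin. apply in_map_iff in Hin. destruct Hin as [x [<- Hx]]; simpl.
  apply Rmult_le_pos; auto.
Qed.

Lemma nonneg_flat_map {A B} (l : list B) (f : B -> Defs.dist A) :
  (forall x, In x l -> nonneg (f x)) -> nonneg (flat_map f l).
Proof.
  intros H pq Hin. apply in_flat_map in Hin. destruct Hin as [x [Hx Hin]].
  exact (H x Hx pq Hin).
Qed.

Lemma subdist_uniform {A} (l : list A) : subdist (uniform l).
Proof.
  split.
  - intros pq Hin. apply in_map_iff in Hin. destruct Hin as [x [<- Hx]]; simpl.
    apply Rlt_le, Rinv_0_lt_compat, lt_0_INR. destruct l; simpl in *; [tauto|lia].
  - unfold mass. rewrite E_uniform, sumR_ones. destruct l as [|x l]; simpl length.
    + simpl; rewrite Rmult_0_r; lra.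
    + rewrite Rinv_l; [lra|]. apply not_0_INR; lia.
Qed.

Lemma subdist_dret {A} (x : A) : subdist (dret x).
Proof.
  split; [intros pq [<-|[]]; simpl; lra|]. unfold mass; rewrite E_dret; lra.
Qed.

Lemma subdist_dbind {A B} (d : Defs.dist A) (f : A -> Defs.dist B) :
  subdist d -> (forall x, subdist (f x)) -> subdist (dbind d f).
Proof.
  intros Hd Hf. split.
  - apply nonneg_flat_map. intros px Hpx. apply nonneg_dscale; [apply Hd; auto|apply Hf].
  - unfold mass. rewrite E_dbind. apply E_le_bound; [auto|lra|]. intros pq _; apply Hf.
Qed.

Lemma subdist_dmap {A B} (f : A -> B) (d : Defs.dist A) : subdist d -> subdist (dmap f d).
Proof.
  intros [Hn Hm]. split; [|unfold mass; now rewrite E_dmap].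
  intros pq Hin. apply in_map_iff in Hin. destruct Hin as [x [<- Hx]]; simpl; auto.
Qed.

Lemma Sup_app {A} (d1 d2 : Defs.dist A) Q : Sup d1 Q -> Sup d2 Q -> Sup (d1 ++ d2) Q.
Proof. intros H1 H2 pq Hin; apply in_app_or in Hin; destruct Hin; auto. Qed.

Lemma Sup_dscale {A} c (d : Defs.dist A) Q : Sup d Q -> Sup (dscale c d) Q.
Proof. intros H pq Hin. apply in_map_iff in Hin. destruct Hin as [x [<- Hx]]; simpl; auto. Qed.

Lemma Sup_flat_map {A B} (l : list B) (f : B -> Defs.dist A) Q :
  (forall x, In x l -> Sup (f x) Q) -> Sup (flat_map f l) Q.
Proof.
  intros H pq Hin. apply in_flat_map in Hin. destruct Hin as [x [Hx Hin]].
  exact (H x Hx pq Hin).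
Qed.

Lemma Sup_dbind {A B} (d : Defs.dist A) (f : A -> Defs.dist B) Q :
  Sup d (fun x => Sup (f x) Q) -> Sup (dbind d f) Q.
Proof. intros H. apply Sup_flat_map. intros px Hpx. apply Sup_dscale, H, Hpx. Qed.

Lemma Sup_dmap {A B} (f : A -> B) d Q : Sup d (fun x => Q (f x)) -> Sup (dmap f d) Q.
Proof. intros H pq Hin. apply in_map_iff in Hin. destruct Hin as [x [<- Hx]]; simpl; auto. Qed.

Lemma Sup_uniform {A} (l : list A) (Q : A -> Prop) :
  (forall x, In x l -> Q x) -> Sup (uniform l) Q.
Proof. intros H pq Hin. apply in_map_iff in Hin. destruct Hin as [x [<- Hx]]; simpl; auto. Qed.

Lemma Sup_dret {A} (x : A) (Q : A -> Prop) : Q x -> Sup (dret x) Q.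
Proof. intros H pq [<-|[]]; simpl; auto. Qed.

Lemma Sup_mono {A} (d : Defs.dist A) (Q1 Q2 : A -> Prop) :
  (forall x, Q1 x -> Q2 x) -> Sup d Q1 -> Sup d Q2.
Proof. intros H H1 pq Hpq; auto. Qed.

Definition ind (b : bool) : R := if b then 1 else 0.

Lemma ind_nonneg (b : bool) : 0 <= ind b.
Proof. destruct b; simpl; lra. Qed.

Fixpoint survive {St : Type} (K : St -> Defs.dist St) (goal : St -> bool)
         (t : nat) (s : St) : R :=
  if goal s then 0 else
  match t with
  | O => 1
  | S t' => E (K s) (survive K goal t')
  end.

Section Drift.

Variable St : Type.
Variable K : St -> Defs.dist St.
Variable goal : St -> bool.
Variable Inv : St -> Prop.
Variable pot : St -> nat.
Variable p : R.

Hypothesis p_pos : 0 < p.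
Hypothesis K_subdist : forall s, Inv s -> subdist (K s).
Hypothesis K_monotone :
  forall s, Inv s -> Sup (K s) (fun s' => Inv s' /\ (pot s' <= pot s)%nat).
Hypothesis K_progress :
  forall s, Inv s -> goal s = false ->
  p <= E (K s) (fun s' => ind (pot s' <? pot s)%nat).

Definition survival_sum (T : nat) (s : St) : R :=
  sumR (map (fun t => survive K goal t s) (seq 0 T)).

Lemma survival_sum_goal (T : nat) (s : St) : goal s = true -> survival_sum T s = 0.
Proof.
  intros Hg. unfold survival_sum. rewrite (sumR_ext_in _ _ (fun _ => 0 * 1)).
  - rewrite sumR_scale; ring.
  - intros t _. destruct t; simpl; rewrite Hg; ring.
Qed.

Lemma survival_sum_succ (T : nat) (s : St) :
  goal s = false -> survival_sum (S T) s = 1 + E (K s) (survival_sum T).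
Proof.
  intros Hg. unfold survival_sum. rewrite <- cons_seq, <- seq_shift.
  simpl map. rewrite map_map. unfold sumR at 1. simpl fold_right. rewrite Hg. f_equal.
  fold (sumR (map (fun t => E (K s) (survive K goal t)) (seq 0 T))).
  unfold E. rewrite sumR_swap. apply sumR_ext_in. intros pq _. apply sumR_scale.
Qed.

Lemma pot_drop (m m' : nat) : (m' <= m)%nat -> INR m' <= INR m - ind (m' <? m)%nat.
Proof.
  intros Hle. destruct (m' <? m)%nat eqn:Hlt; simpl.
  - apply Nat.ltb_lt, le_INR in Hlt. rewrite S_INR in Hlt. lra.
  - apply Nat.ltb_ge in Hlt. replace m' with m by lia. lra.
Qed.

(* By induction on T: one step costs 1 and lowers the expected potential/p by
   at least p/p = 1. *)
Theorem drift_bound (T : nat) (s : St) :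
  Inv s -> survival_sum T s <= INR (pot s) / p.
Proof.
  assert (Hdiv : forall s, 0 <= INR (pot s) / p)
    by (intros; unfold Rdiv;
        apply Rmult_le_pos; [apply pos_INR|apply Rlt_le, Rinv_0_lt_compat, p_pos]).
  revert s. induction T as [|T IH]; intros s Hs; [apply Hdiv|].
  destruct (goal s) eqn:Hg; [rewrite survival_sum_goal; auto|].
  rewrite survival_sum_succ by exact Hg.
  destruct (K_subdist s Hs) as [Hn Hm].
  set (m := pot s). set (drop := fun s' => ind (pot s' <? m)%nat).
  assert (Hstep : E (K s) (survival_sum T) <= E (K s) (fun s' => / p * (INR m - drop s'))).
  { apply E_mono; [exact Hn|]. intros pq Hpq. destruct (K_monotone s Hs pq Hpq) as [Hi Hle].
    eapply Rle_trans; [apply IH, Hi|]. unfold Rdiv. rewrite Rmult_comm.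
    apply Rmult_le_compat_l; [apply Rlt_le, Rinv_0_lt_compat, p_pos|].
    now apply pot_drop. }
  rewrite E_scale, E_affine in Hstep.
  assert (Hprog : p <= E (K s) drop) by exact (K_progress s Hs Hg).
  assert (Hmass : INR m * mass (K s) <= INR m).
  { rewrite <- (Rmult_1_r (INR m)) at 2. apply Rmult_le_compat_l; [apply pos_INR|exact Hm]. }
  assert (Hfin : / p * (INR m * mass (K s) - E (K s) drop) <= / p * (INR m - p)).
  { apply Rmult_le_compat_l; [apply Rlt_le, Rinv_0_lt_compat, p_pos|lra]. }
  replace (INR m / p) with (1 + / p * (INR m - p)) by (field; lra).
  lra.
Qed.

End Drift.

Lemma lits_valid (n : nat) (u : lit) : In u (lits n) -> tvalid n (Leaf u).
Proof.
  unfold lits. intros H. apply in_flat_map in H. destruct H as [i [Hi Hu]].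
  apply in_seq in Hi. simpl in Hu. destruct Hu as [<-|[<-|[]]]; simpl; lia.
Qed.

Lemma subs_valid (n : nat) (t : tree) (u : lit) : tvalid n t -> tvalid n (Leaf u) ->
  forall t', In t' (subs t u) -> tvalid n t'.
Proof.
  induction t as [v|l IHl r IHr]; simpl; intros Ht Hu t' Hin.
  - destruct Hin as [<-|[]]; auto.
  - destruct Ht as [Hl Hr]. apply in_app_or in Hin.
    destruct Hin as [Hin|Hin]; apply in_map_iff in Hin; destruct Hin as [x [<- Hx]];
      simpl; split; auto.
Qed.

Lemma ins_valid (n : nat) (t : tree) (u : lit) : tvalid n t -> tvalid n (Leaf u) ->
  forall t', In t' (ins t u) -> tvalid n t'.
Proof.
  induction t as [v|l IHl r IHr]; simpl; intros Ht Hu t' Hin.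
  - destruct Hin as [<-|[<-|[]]]; simpl; auto.
  - destruct Hin as [<-|[<-|Hin]]; [simpl; auto|simpl; auto|].
    destruct Ht as [Hl Hr]. apply in_app_or in Hin.
    destruct Hin as [Hin|Hin]; apply in_map_iff in Hin; destruct Hin as [x [<- Hx]];
      simpl; split; auto.
Qed.

Lemma del_valid_smaller (n : nat) (t : tree) :
  forall t', In t' (del t) -> (tvalid n t -> tvalid n t') /\ (tsize t' < tsize t)%nat.
Proof.
  induction t as [v|l IHl r IHr]; simpl; intros t' Hin; [tauto|].
  apply in_app_or in Hin. destruct Hin as [Hin|Hin].
  - destruct l as [v|l1 l2]; simpl in Hin.
    + destruct Hin as [<-|[]]; simpl; split; [tauto|lia].
    + apply in_map_iff in Hin. destruct Hin as [x [<- Hx]].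
      destruct (IHl x Hx) as [Hv Hs]. simpl in *. split; [tauto|lia].
  - destruct r as [v|r1 r2]; simpl in Hin.
    + destruct Hin as [<-|[]]; simpl; split; [tauto|lia].
    + apply in_map_iff in Hin. destruct Hin as [x [<- Hx]].
      destruct (IHr x Hx) as [Hv Hs]. simpl in *. split; [tauto|lia].
Qed.

Lemma del_nonempty (l r : tree) : del (Join l r) <> [].
Proof.
  revert r. induction l as [v|l1 IH1 l2 IH2]; intros r; [discriminate|].
  change (map (fun l' => Join l' r) (del (Join l1 l2)) ++
     (match r with Leaf _ => [Join l1 l2] | _ => map (Join (Join l1 l2)) (del r) end)
     <> []).
  intros H. apply app_eq_nil in H. destruct H as [H _].
  apply map_eq_nil in H. exact (IH1 l2 H).
Qed.

Lemma hvl_subdist (n : nat) (X : stree) : subdist (hvl n X).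
Proof.
  assert (Hops : subdist (substitute_d n X) /\ subdist (insert_d n X) /\ subdist (delete_d X)).
  { destruct X as [[u|l r]|]; simpl;
      repeat split; try apply subdist_uniform; apply subdist_dret. }
  destruct Hops as [[Hn1 Hm1] [[Hn2 Hm2] [Hn3 Hm3]]].
  assert (Hthird : 0 <= 1 / 3) by lra.
  split.
  - unfold hvl. repeat apply nonneg_app; apply nonneg_dscale; auto.
  - unfold hvl, mass in *. rewrite !E_app, !E_dscale. lra.
Qed.

Lemma hvl_valid (n : nat) (X : stree) : valid n X -> Sup (hvl n X) (valid n).
Proof.
  intros HX. unfold hvl. repeat apply Sup_app; apply Sup_dscale;
    destruct X as [t|]; simpl in *; try (apply Sup_dret; exact I).
  - apply Sup_uniform. intros x Hx. apply in_flat_map in Hx. destruct Hx as [u [Hu Hx]].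
    apply in_map_iff in Hx. destruct Hx as [t' [<- Ht']].
    eapply subs_valid; eauto. apply lits_valid; auto.
  - apply Sup_uniform. intros x Hx. apply in_flat_map in Hx. destruct Hx as [u [Hu Hx]].
    apply in_map_iff in Hx. destruct Hx as [t' [<- Ht']].
    eapply ins_valid; eauto. apply lits_valid; auto.
  - apply Sup_uniform. intros x Hx. apply in_map_iff in Hx. destruct Hx as [u [<- Hu]].
    apply lits_valid; auto.
  - destruct t; [apply Sup_dret; exact I|].
    apply Sup_uniform. intros x Hx. apply in_map_iff in Hx. destruct Hx as [t' [<- Ht']].
    apply (del_valid_smaller n _ t' Ht'); auto.
Qed.

Lemma hvl_iter_subdist_valid (n m : nat) (X : stree) :
  subdist (hvl_iter n m X) /\ (valid n X -> Sup (hvl_iter n m X) (valid n)).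
Proof.
  induction m as [|m [IHd IHv]]; simpl.
  - split; [apply subdist_dret|intros; apply Sup_dret; auto].
  - split; [apply subdist_dbind; auto; apply hvl_subdist|].
    intros HX. apply Sup_dbind. intros pq Hpq. apply hvl_valid, (IHv HX pq Hpq).
Qed.

Lemma exp1_partial_sum (J : nat) : sum_f_R0 (fun i => / INR (fact i) * 1 ^ i) J <= exp 1.
Proof.
  apply (growing_ineq (fun N => sum_f_R0 (fun i => / INR (fact i) * 1 ^ i) N)).
  - intros N. rewrite tech5, pow1, Rmult_1_r.
    assert (0 < / INR (fact (S N))) by (apply Rinv_0_lt_compat, INR_fact_lt_0). lra.
  - exact (proj2_sig (exist_exp 1)).
Qed.

Lemma poisson_weight_nonneg (j : nat) : 0 <= exp (-1) / INR (fact j).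
Proof.
  unfold Rdiv. apply Rmult_le_pos; [apply Rlt_le, exp_pos|].
  apply Rlt_le, Rinv_0_lt_compat, INR_fact_lt_0.
Qed.

Lemma poisson_mass_le1 (J : nat) :
  sumR (map (fun j => exp (-1) / INR (fact j)) (seq 0 (S J))) <= 1.
Proof.
  assert (Hsum : sumR (map (fun j => / INR (fact j)) (seq 0 (S J))) =
                 sum_f_R0 (fun i => / INR (fact i) * 1 ^ i) J).
  { induction J as [|J IH]; [unfold sumR; simpl; ring|].
    rewrite seq_S, map_app, sumR_app, IH, tech5, pow1.
    unfold sumR; simpl. ring. }
  unfold Rdiv. rewrite sumR_scale, Hsum.
  apply Rle_trans with (exp (-1) * exp 1).
  - apply Rmult_le_compat_l; [apply Rlt_le, exp_pos|apply exp1_partial_sum].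
  - rewrite <- exp_plus. replace (-1 + 1) with 0 by ring. rewrite exp_0. lra.
Qed.

Lemma mutate_subdist (a : algo) (n J : nat) (X : stree) : subdist (mutate a n J X).
Proof.
  destruct a; unfold mutate; [apply hvl_subdist|]. split.
  - apply nonneg_flat_map. intros j _. apply nonneg_dscale;
      [apply poisson_weight_nonneg|apply hvl_iter_subdist_valid].
  - unfold mass. rewrite E_flat_map. eapply Rle_trans; [|apply (poisson_mass_le1 J)].
    apply sumR_le. intros j _. rewrite E_dscale.
    rewrite <- (Rmult_1_r (exp (-1) / INR (fact j))) at 2.
    apply Rmult_le_compat_l; [apply poisson_weight_nonneg|apply hvl_iter_subdist_valid].
Qed.

Lemma mutate_valid (a : algo) (n J : nat) (X : stree) :
  valid n X -> Sup (mutate a n J X) (valid n).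
Proof.
  intros HX. destruct a; unfold mutate; [now apply hvl_valid|].
  apply Sup_flat_map. intros j _. apply Sup_dscale. now apply hvl_iter_subdist_valid.
Qed.

Lemma hvl_shrinks (n : nat) (t : tree) :
  1 / 3 <= E (hvl n (Some t)) (fun Y => ind (cplx Y <? tsize t)%nat).
Proof.
  set (h := fun Y => ind (cplx Y <? tsize t)%nat).
  assert (Hdel : E (delete_d (Some t)) h = 1).
  { destruct t as [u|l r]; [simpl; rewrite E_dret; reflexivity|].
    change (delete_d (Some (Join l r))) with (uniform (map Some (del (Join l r)))).
    rewrite E_uniform, length_map, map_map.
    rewrite (sumR_ext_in _ (fun x => h (Some x)) (fun _ => 1)).
    - rewrite sumR_ones. apply Rinv_l, not_0_INR.
      generalize (del_nonempty l r). destruct (del (Join l r)); simpl; [tauto|lia].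
    - intros x Hx. destruct (del_valid_smaller 0 _ x Hx) as [_ Hs].
      unfold h. simpl cplx. apply Nat.ltb_lt in Hs. rewrite Hs. reflexivity. }
  assert (Hh : forall Y, 0 <= h Y) by (intros; apply ind_nonneg).
  assert (0 <= E (substitute_d n (Some t)) h)
    by (apply E_nonneg; [apply subdist_uniform|intros ??; auto]).
  assert (0 <= E (insert_d n (Some t)) h)
    by (apply E_nonneg; [apply subdist_uniform|intros ??; auto]).
  unfold hvl. rewrite !E_app, !E_dscale, Hdel. lra.
Qed.

(* Either mutation operator shrinks a non-empty tree with probability at least
   e^{-1}/3: for SMO-GP-multi, k' = 1 already happens with probability e^{-1}. *)
Lemma mutate_shrinks (a : algo) (n J : nat) (t : tree) :
  exp (-1) / 3 <= E (mutate a n J (Some t)) (fun Y => ind (cplx Y <? tsize t)%nat).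
Proof.
  set (h := fun Y => ind (cplx Y <? tsize t)%nat).
  assert (Hh : forall Y, 0 <= h Y) by (intros; apply ind_nonneg).
  assert (Hhvl := hvl_shrinks n t). fold h in Hhvl.
  assert (He : 0 < exp (-1)) by apply exp_pos.
  destruct a; unfold mutate.
  - assert (exp (-1) < 1) by (rewrite <- exp_0; apply exp_increasing; lra). lra.
  - rewrite E_flat_map.
    eapply Rle_trans; [|apply (sumR_in _ _ 0%nat); [apply in_seq; lia|]].
    + cbv beta. rewrite E_dscale.
      change (hvl_iter n 1 (Some t)) with (dbind (dret (Some t)) (hvl n)).
      rewrite E_dbind, E_dret.
      replace (exp (-1) / INR (fact 0)) with (exp (-1)) by (simpl; field).
      replace (exp (-1) / 3) with (exp (-1) * (1 / 3)) by field.
      apply Rmult_le_compat_l; lra.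
    + intros j _. rewrite E_dscale. apply Rmult_le_pos; [apply poisson_weight_nonneg|].
      apply E_nonneg; [apply hvl_iter_subdist_valid|intros ??; auto].
Qed.

Definition min_cplx (b : nat) (l : list stree) : nat :=
  fold_right (fun X m => Nat.min (cplx X) m) b l.

Definition cmin (P : list stree) : nat := min_cplx (cplx (hd None P)) P.

Lemma min_cplx_le (b : nat) (l : list stree) (X : stree) :
  In X l -> (min_cplx b l <= cplx X)%nat.
Proof.
  induction l as [|Y l IH]; simpl; intros Hin; [tauto|].
  destruct Hin as [<-|Hin]; [lia|]. specialize (IH Hin). lia.
Qed.

Lemma min_cplx_attained (b : nat) (l : list stree) :
  min_cplx b l = b \/ exists X, In X l /\ min_cplx b l = cplx X.
Proof.
  induction l as [|Y l IH]; simpl; [auto|].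
  destruct (Nat.min_spec (cplx Y) (min_cplx b l)) as [[_ ->]|[_ ->]];
    [right; exists Y; auto|].
  destruct IH as [IH|[X [HX IH]]]; [left|right; exists X]; auto.
Qed.

Lemma cmin_le (P : list stree) (X : stree) : In X P -> (cmin P <= cplx X)%nat.
Proof. apply min_cplx_le. Qed.

Lemma cmin_attained (P : list stree) : P <> [] -> exists X, In X P /\ cplx X = cmin P.
Proof.
  intros HP. unfold cmin. destruct (min_cplx_attained (cplx (hd None P)) P) as [E1|[X [HX E1]]].
  - exists (hd None P). split; [destruct P; simpl; [congruence|auto]|auto].
  - exists X; auto.
Qed.

(* Population invariant: non-empty, valid trees, pairwise distinct F-values
   (two trees with equal F-value are comparable, so one would be removed). *)
Definition pop_inv (n : nat) (F : stree -> R) (P : list stree) : Prop :=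
  P <> [] /\ (forall X, In X P -> valid n X) /\ NoDup (map F P).

Lemma pop_size (n : nat) (F : stree -> R) (k : nat) (P : list stree) :
  at_most_k_values n F k -> pop_inv n F P -> (1 <= length P <= k)%nat.
Proof.
  intros [vals [Hl Hv]] [HP [HPv Hd]]. split; [destruct P; [congruence|simpl; lia]|].
  rewrite <- (length_map F P). eapply Nat.le_trans; [|exact Hl].
  apply NoDup_incl_length; auto. intros x Hx. apply in_map_iff in Hx.
  destruct Hx as [X [<- HX]]. apply Hv, HPv; auto.
Qed.

Lemma Rleb_refl (x : R) : Rleb x x = true.
Proof. unfold Rleb; destruct (Rle_dec x x); [reflexivity|lra]. Qed.

Lemma NoDup_map_filter {A B} (F : A -> B) (f : A -> bool) (l : list A) :
  NoDup (map F l) -> NoDup (map F (filter f l)).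
Proof.
  induction l as [|x l IH]; simpl; intros H; auto. inversion H as [|? ? Hx Hl]; subst.
  destruct (f x); simpl; auto. constructor; auto. intros Hin. apply Hx.
  apply in_map_iff in Hin. destruct Hin as [y [Hy Hin]]. apply filter_In in Hin.
  rewrite <- Hy. apply in_map. tauto.
Qed.

(* If Y is accepted, every Z with F Z = F Y is weakly dominated by Y (otherwise
   Z would strictly dominate Y), so it is removed: F-values stay distinct. *)
Lemma update_inv (n : nat) (F : stree -> R) (P : list stree) (Y : stree) :
  pop_inv n F P -> valid n Y -> pop_inv n F (update F P Y).
Proof.
  intros [HP [Hv Hd]] HY. unfold update.
  destruct (existsb (fun Z => sdom F Z Y) P) eqn:Hex; [split; auto|].
  split; [discriminate|split].
  - intros X [<-|HX]; auto. apply filter_In in HX. apply Hv; tauto.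
  - simpl. constructor; [|apply NoDup_map_filter; auto].
    intros Hin. apply in_map_iff in Hin. destruct Hin as [Z [HZ Hin]].
    apply filter_In in Hin. destruct Hin as [HZP Hw].
    assert (Hs : sdom F Z Y = false).
    { destruct (sdom F Z Y) eqn:E1; auto.
      assert (existsb (fun Z => sdom F Z Y) P = true) by (apply existsb_exists; eauto).
      congruence. }
    unfold wdom in Hw. unfold sdom, wdom in Hs. rewrite HZ, Rleb_refl in *. simpl in *.
    destruct (Nat.leb (cplx Y) (cplx Z)) eqn:E1; [discriminate|].
    apply Nat.leb_gt in E1.
    rewrite (proj2 (Nat.leb_le _ _)), (proj2 (Nat.ltb_lt _ _)), Bool.orb_true_r in Hs
      by lia.
    discriminate.
Qed.

(* A tree of minimum complexity is only removed by a tree that is at least as simple. *)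
Lemma update_cmin_le (F : stree -> R) (P : list stree) (Y : stree) :
  P <> [] -> (cmin (update F P Y) <= cmin P)%nat.
Proof.
  intros HP. unfold update.
  destruct (existsb (fun Z => sdom F Z Y) P) eqn:Hex; [lia|].
  destruct (cmin_attained P HP) as [X [HX EX]].
  destruct (wdom F Y X) eqn:Hw.
  - unfold wdom in Hw. apply andb_prop in Hw. destruct Hw as [_ Hw]. apply Nat.leb_le in Hw.
    assert (cmin (Y :: filter (fun Z => negb (wdom F Y Z)) P) <= cplx Y)%nat
      by (apply cmin_le; simpl; auto).
    lia.
  - assert (cmin (Y :: filter (fun Z => negb (wdom F Y Z)) P) <= cplx X)%nat.
    { apply cmin_le; simpl; right. apply filter_In. rewrite Hw; auto. }
    lia.
Qed.

(* An offspring simpler than every tree in P is never strictly dominated, so it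
   is accepted and lowers the minimum complexity. *)
Lemma update_cmin_lt (F : stree -> R) (P : list stree) (Y : stree) :
  (cplx Y < cmin P)%nat -> (cmin (update F P Y) < cmin P)%nat.
Proof.
  intros HY. unfold update.
  destruct (existsb (fun Z => sdom F Z Y) P) eqn:Hex.
  - exfalso. apply existsb_exists in Hex. destruct Hex as [Z [HZ Hs]].
    unfold sdom, wdom in Hs. apply andb_prop in Hs. destruct Hs as [Hs _].
    apply andb_prop in Hs. destruct Hs as [_ Hs]. apply Nat.leb_le in Hs.
    apply cmin_le in HZ. lia.
  - assert (cmin (Y :: filter (fun Z => negb (wdom F Y Z)) P) <= cplx Y)%nat
      by (apply cmin_le; simpl; auto).
    lia.
Qed.

Lemma step_subdist (a : algo) (n J : nat) (F : stree -> R) (P : list stree) :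
  subdist (step a n J F P).
Proof.
  apply subdist_dbind; [apply subdist_uniform|]. intros X.
  apply subdist_dmap, mutate_subdist.
Qed.

Lemma step_monotone (a : algo) (n J : nat) (F : stree -> R) (P : list stree) :
  pop_inv n F P ->
  Sup (step a n J F P) (fun Q => pop_inv n F Q /\ (cmin Q <= cmin P)%nat).
Proof.
  intros HI. apply Sup_dbind, Sup_uniform. intros X HX. apply Sup_dmap.
  apply (Sup_mono _ (valid n)); [|apply mutate_valid, (proj1 (proj2 HI)), HX].
  intros Y HY. split; [now apply update_inv|apply update_cmin_le, HI].
Qed.

Lemma has_empty_false (P : list stree) : has_empty P = false -> ~ In None P.
Proof.
  intros H HN. assert (has_empty P = true); [|congruence].
  apply existsb_exists. exists None; auto.
Qed.

(* Selecting a simplest tree (probability >= 1/k) and shrinking it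
   (probability >= e^{-1}/3) lowers the minimum complexity. *)
Lemma step_progress (a : algo) (n J : nat) (F : stree -> R) (k : nat) (P : list stree) :
  at_most_k_values n F k -> pop_inv n F P -> has_empty P = false ->
  exp (-1) / (3 * INR k) <= E (step a n J F P) (fun Q => ind (cmin Q <? cmin P)%nat).
Proof.
  intros Hk HI He. destruct (pop_size n F k P Hk HI) as [Hlen1 Hlenk].
  destruct (cmin_attained P (proj1 HI)) as [[t|] [Ht Hmin]];
    [|exfalso; exact (has_empty_false P He Ht)].
  set (gain := fun X => E (dmap (update F P) (mutate a n J X))
                          (fun Q => ind (cmin Q <? cmin P)%nat)).
  assert (Hgain : forall X, 0 <= gain X).
  { intros X. apply E_nonneg; [apply subdist_dmap, mutate_subdist|].
    intros ? ?; apply ind_nonneg. }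
  assert (Hbest : exp (-1) / 3 <= gain (Some t)).
  { eapply Rle_trans; [apply (mutate_shrinks a n J t)|]. unfold gain. rewrite E_dmap.
    apply E_mono; [apply mutate_subdist|]. intros pq _. simpl in Hmin. rewrite Hmin.
    destruct (cplx (snd pq) <? cmin P)%nat eqn:Hlt; [|apply ind_nonneg].
    apply Nat.ltb_lt, (update_cmin_lt F) in Hlt. apply Nat.ltb_lt in Hlt.
    rewrite Hlt. lra. }
  assert (Hsum : exp (-1) / 3 <= sumR (map gain P))
    by (eapply Rle_trans; [exact Hbest|apply sumR_in; auto]).
  assert (HP : 0 < INR (length P)) by (apply lt_0_INR; lia).
  assert (Hinv : / INR k <= / INR (length P)) by (apply Rinv_le_contravar, le_INR; auto).
  unfold step. rewrite E_dbind, E_uniform. fold gain.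
  replace (exp (-1) / (3 * INR k)) with (/ INR k * (exp (-1) / 3))
    by (field; apply not_0_INR; lia).
  assert (0 <= exp (-1) / 3) by (generalize (exp_pos (-1)); lra).
  apply Rmult_le_compat; auto. apply Rlt_le, Rinv_0_lt_compat, lt_0_INR. lia.
Qed.

Lemma pnothit_survive (a : algo) (n J : nat) (F : stree -> R) (t : nat) (P : list stree) :
  pnothit a n J F t P = survive (step a n J F) has_empty t P.
Proof.
  revert P. induction t as [|t IH]; intros P; simpl; [reflexivity|].
  destruct (has_empty P); [reflexivity|]. unfold E, sumR. f_equal.
  apply map_ext. intros pq. rewrite IH. reflexivity.
Qed.

Theorem lemma1 :
  exists c : R, 0 < c /\
    forall (a : algo) (n : nat) (F : stree -> R) (k : nat) (X0 : stree),
      (1 <= n)%nat ->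
      at_most_k_values n F k ->
      valid n X0 ->
      expected_hit_le a n F X0 (c * INR k * INR (cplx X0)).
Proof.
  exists (3 * exp 1). split; [generalize (exp_pos 1); lra|].
  intros a n F k X0 _ Hk HX0 J T.
  assert (HI : pop_inv n F [X0]).
  { split; [discriminate|split; [intros X [<-|[]]; auto|repeat constructor; simpl; tauto]]. }
  assert (Hk1 : (1 <= k)%nat) by apply (pop_size n F k [X0] Hk HI).
  assert (Hp : 0 < exp (-1) / (3 * INR k)).
  { apply Rdiv_lt_0_compat; [apply exp_pos|]. apply Rmult_lt_0_compat; [lra|].
    apply lt_0_INR; lia. }
  assert (Hdrift := drift_bound _ (step a n J F) has_empty (pop_inv n F) cmin _ Hp
                      (fun P _ => step_subdist a n J F P) (step_monotone a n J F)
                      (fun P => step_progress a n J F k P Hk) T [X0] HI).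
  unfold survival_sum in Hdrift.
  rewrite (sumR_ext_in _ _ (fun t => survive (step a n J F) has_empty t [X0])) by
    (intros; apply pnothit_survive).
  eapply Rle_trans; [exact Hdrift|]. right.
  replace (cmin [X0]) with (cplx X0) by (unfold cmin, min_cplx; simpl; lia).
  replace (exp (-1)) with (/ exp 1) by (rewrite <- exp_Ropp; f_equal; ring).
  field. split; [apply Rgt_not_eq, exp_pos|apply not_0_INR; lia].
Qed.
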